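(* Let $q\in K(\!(\mathbf{t})\!)^\circ$ satisfy $\operatorname{trop}(q)\ll 1$. Then $q$ lies in every maximal ideal of $K(\!(\mathbf{t})\!)^\circ$.
   Context: $K$ is a field of characteristic zero, $\mathbf{t}=(t_1,\dots,t_m)$, $K(\!(\mathbf{t})\!)=\operatorname{Frac}K[\![\mathbf{t}]\!]$. $V\mathbb{B}[\mathbf{t}]$ is the semiring of subsets of $\mathbb{N}^m$ equal to the vertex set of their Newton polyhedron $\operatorname{conv}(\cdot)+\mathbb{R}^m_{\ge0}$, with $a\oplus b$ = vertices of the Newton polyhedron of $a\cup b$, $a\odot b$ = vertices of that of $a+b$; order $a\le b$ iff $a\oplus b=b$. $V\mathbb{B}(\mathbf{t})$ is its fraction semifield, ordered by $a/b\le c/d$ iff $a\odot d\le b\odot c$. $\operatorname{trop}(f)$ is the vertex set of the Newton polyhedron of $\operatorname{Supp}(f)$, $\operatorname{trop}(f/g)=\operatorname{trop}(f)/\operatorname{trop}(g)$, and $K(\!(\mathbf{t})\!)^\circ=\{q:\operatorname{trop}(q)\le1\}$. For $a\le b$ in $V\mathbb{B}[\mathbf{t}]$, $a\ll b$ ($a$ irrelevant for $b$) means $a\cap b=\emptyset$ as subsets of $\mathbb{N}^m$; for $\frac ab\le\frac cd$ in $V\mathbb{B}(\mathbf{t})$, $\frac ab\ll\frac cd$ means $a\odot d\ll c\odot b$. *)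

(* Multivariate formal power series K[[t_1..t_m]] are
   coefficient functions on exponent vectors N^m ('I_m -> nat); the fraction
   field K((t)) is given by its universal description (a field F with an
   injective ring morphism from K[[t]] such that every element is a quotient). *)
From HB Require Import structures.
From mathcomp Require Import all_boot all_order all_algebra.
From Stdlib Require Rdefinitions.
From mathcomp Require Import Rstruct.
Set Implicit Arguments. Unset Strict Implicit. Unset Printing Implicit Defensive.
Import Order.TTheory GRing.Theory Num.Theory.
Local Open Scope ring_scope.

Definition mono (m : nat) := 'I_m -> nat.

Definition ps (K : fieldType) (m : nat) := mono m -> K.

Section PowerSeries.
Variables (K : fieldType) (m : nat).

Definition ps_zero : ps K m := fun _ => 0.
Definition ps_one : ps K m := fun a => if [forall i, a i == 0%N] then 1 else 0.
Definition ps_add (f g : ps K m) : ps K m := fun a => f a + g a.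
Definition ps_bnd (c : mono m) : nat := (\max_(i < m) c i).+1.
(* Cauchy product: coefficient of t^c is sum over a <= c of f_a g_(c-a) *)
Definition ps_mul (f g : ps K m) : ps K m := fun c =>
  \sum_(a : {ffun 'I_m -> 'I_(ps_bnd c)} | [forall i, (a i <= c i)%N])
     f (fun i => nat_of_ord (a i)) * g (fun i => (c i - a i)%N).

Definition Supp (f : ps K m) : mono m -> Prop := fun a => f a != 0.
End PowerSeries.

Definition is_frac_field (K : fieldType) (m : nat) (F : fieldType)
    (iota : ps K m -> F) : Prop :=
  [/\ forall f g, iota (ps_add f g) = iota f + iota g,
      forall f g, iota (ps_mul f g) = iota f * iota g,
      iota (@ps_one K m) = 1,
      injective iota &
      forall q : F, exists f g, iota g != 0 /\ q = iota f / iota g].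

Section Tropical.
Variable m : nat.
Definition pt := 'I_m -> Rdefinitions.R.
Definition ptN (a : mono m) : pt := fun i => (a i)%:R.

(* Newton polyhedron conv(S) + R^m_{>=0} *)
Definition newt (S : mono m -> Prop) : pt -> Prop := fun x =>
  exists (s : seq (mono m)) (l : seq Rdefinitions.R),
    [/\ forall j, (j < size s)%N -> S (nth (fun _ => 0%N) s j), size l = size s,
        forall r, r \in l -> 0 <= r, \sum_(r <- l) r = 1 &
        forall i, \sum_(j < size s) l`_j * (nth (fun _ => 0%N) s j i)%:R <= x i].

Definition is_vertex (P : pt -> Prop) (v : pt) : Prop :=
  P v /\ forall (a b : pt) (lam : Rdefinitions.R), P a -> P b -> 0 < lam < 1 ->
     (forall i, v i = lam * a i + (1 - lam) * b i) -> forall i, a i = v i.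

(* elements of VB[t]: subsets of N^m (vertex sets of Newton polyhedra) *)
Definition vb := mono m -> Prop.
Definition vverts (S : vb) : vb := fun a => is_vertex (newt S) (ptN a).
Definition vb_add (a b : vb) : vb := vverts (fun x => a x \/ b x).
Definition vb_mul (a b : vb) : vb :=
  vverts (fun x => exists y z, [/\ a y, b z & forall i, x i = (y i + z i)%N]).
Definition vb_one : vb := fun x => forall i, x i = 0%N.
Definition vb_eq (a b : vb) : Prop := forall x, a x <-> b x.
Definition vb_le (a b : vb) : Prop := vb_eq (vb_add a b) b.
Definition vb_ll (a b : vb) : Prop := vb_le a b /\ forall x, a x -> ~ b x.

(* fraction semifield VB(t): pairs (numerator, denominator) *)
Definition vfrac_le (ab cd : vb * vb) : Prop :=
  vb_le (vb_mul ab.1 cd.2) (vb_mul ab.2 cd.1).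
Definition vfrac_ll (ab cd : vb * vb) : Prop :=
  vfrac_le ab cd /\ vb_ll (vb_mul ab.1 cd.2) (vb_mul cd.1 ab.2).
Definition vfrac_one : vb * vb := (vb_one, vb_one).
End Tropical.

Definition trop (K : fieldType) (m : nat) (f : ps K m) : vb m := vverts (Supp f).

Section Circ.
Variables (K : fieldType) (m : nat) (F : fieldType) (iota : ps K m -> F).

(* q has trop(q) = trop(f)/trop(g) for a representation q = f/g *)
Definition in_circ (q : F) : Prop :=
  exists f g, [/\ iota g != 0, q = iota f / iota g &
                  vfrac_le (trop f, trop g) (vfrac_one m)].

Definition trop_ll_one (q : F) : Prop :=
  exists f g, [/\ iota g != 0, q = iota f / iota g &
                  vfrac_ll (trop f, trop g) (vfrac_one m)].

Definition circ_ideal (I : F -> Prop) : Prop :=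
  [/\ forall x, I x -> in_circ x,
      I 0,
      forall x y, I x -> I y -> I (x - y) &
      forall r x, in_circ r -> I x -> I (r * x)].
Definition circ_proper_ideal (I : F -> Prop) : Prop := circ_ideal I /\ ~ I 1.
Definition circ_maximal_ideal (I : F -> Prop) : Prop :=
  circ_proper_ideal I /\
  forall J, circ_proper_ideal J -> (forall x, I x -> J x) -> forall x, J x -> I x.
End Circ.

(* Write q = f/g with Supp f inside the Newton polyhedron of g, the Newton
   polyhedra of f and g having no common vertex.  For r = a/b in K((t))°, the
   coefficient of af vanishes at every vertex v of Newt(bg): writing v = y + z
   with y in Supp a ⊆ Newt(b) and z in Supp f, the inclusion
   Newt(b) + Newt(g) ⊆ Newt(bg) makes z a vertex of Newt(g), hence of Newt(f).
   So bg - af contains the vertices of Newt(bg) in its support, hence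
   Newt(bg) ⊆ Newt(bg - af), and 1 - rq = (bg - af)/bg is a unit of K((t))°.
   An element q such that 1 - rq is a unit for every r lies in every maximal
   ideal.  The polyhedral facts used (a Newton polyhedron is spanned by its
   vertices, which is where Dickson's lemma enters, and these vertices lie in
   the generating set) hold for arbitrary subsets of N^m. *)

From mathcomp Require Import all_boot all_order all_algebra.
From mathcomp Require Import Rstruct lra ring.
From Stdlib Require Import Classical FunctionalExtensionality PropExtensionality.
From Stdlib Require List.
Set Implicit Arguments. Unset Strict Implicit. Unset Printing Implicit Defensive.
Import Order.TTheory GRing.Theory Num.Theory.
Local Open Scope ring_scope.

Notation RR := Rdefinitions.R.

Section WeightedLists.
Variable m : nat.
Implicit Types (S T : mono m -> Prop) (c d : seq (RR * mono m)).

Definition weighted S c := List.Forall (fun p => 0 <= p.1 /\ S p.2) c.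
Definition wsum c : RR := \sum_(p <- c) p.1.
Definition wpt c : pt m := fun i => \sum_(p <- c) p.1 * (p.2 i)%:R.
Definition wscale (k : RR) c := [seq (k * p.1, p.2) | p <- c].

Lemma weighted_mono S T c : (forall a, S a -> T a) -> weighted S c -> weighted T c.
Proof. by move=> ST; apply: List.Forall_impl => p [? /ST]. Qed.

Lemma weighted_cat S c d : weighted S c -> weighted S d -> weighted S (c ++ d).
Proof. by move=> Hc Hd; apply/List.Forall_app. Qed.

Lemma weighted_scale S k c : 0 <= k -> weighted S c -> weighted S (wscale k c).
Proof.
move=> k0 Hc; apply/List.Forall_map; apply: List.Forall_impl Hc => p [p0 Sp].
by split=> //; apply: mulr_ge0.
Qed.

Lemma wsum_cat c d : wsum (c ++ d) = wsum c + wsum d.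
Proof. exact: big_cat. Qed.

Lemma wpt_cat c d i : wpt (c ++ d) i = wpt c i + wpt d i.
Proof. exact: big_cat. Qed.

Lemma wsum_scale k c : wsum (wscale k c) = k * wsum c.
Proof. by rewrite /wsum big_map mulr_sumr. Qed.

Lemma wpt_scale k c i : wpt (wscale k c) i = k * wpt c i.
Proof. by rewrite /wpt big_map mulr_sumr; apply: eq_bigr => p _; rewrite mulrA. Qed.

Lemma wsum_ge0 S c : weighted S c -> 0 <= wsum c.
Proof.
elim=> [|p {}c [p0 _] _ IH]; first by rewrite /wsum big_nil.
by rewrite /wsum big_cons addr_ge0.
Qed.

Lemma wpt_wsum0 S c i : weighted S c -> wsum c = 0 -> wpt c i = 0.
Proof.
elim=> [|p {}c [p0 _] Hc IH]; first by rewrite /wpt big_nil.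
rewrite /wsum big_cons => /eqP; rewrite paddr_eq0 ?(wsum_ge0 Hc) //.
by move=> /andP[/eqP p_0 /eqP/IH]; rewrite /wpt big_cons p_0 mul0r add0r.
Qed.

Lemma wsum_filterC (P : pred (RR * mono m)) c :
  wsum c = wsum (filter P c) + wsum (filter (predC P) c).
Proof. by rewrite /wsum !big_filter [LHS](bigID P). Qed.

Lemma wpt_filterC (P : pred (RR * mono m)) c i :
  wpt c i = wpt (filter P c) i + wpt (filter (predC P) c) i.
Proof. by rewrite /wpt !big_filter [LHS](bigID P). Qed.

End WeightedLists.

Lemma Forall_nthP (A : Type) (P : A -> Prop) (d : A) (s : seq A) :
  List.Forall P s <-> forall j, (j < size s)%N -> P (nth d s j).
Proof.
elim: s => [|a s IH] /=; first by split=> // _ [].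
rewrite List.Forall_cons_iff IH.
split=> [[Pa Hs] [|j] //= /Hs|Hs]; first by [].
by split=> [|j]; [apply: (Hs 0%N) | apply: (Hs j.+1)].
Qed.

Lemma In_cat_consN (T : Type) (M1 M2 : seq T) (s b : T) :
  List.In b (M1 ++ s :: M2) -> b <> s -> List.In b (M1 ++ M2).
Proof.
move=> bM ne_bs; apply: List.in_or_app.
by case: (List.in_app_or _ _ _ bM) => [b1 | /= [sb | b2]]; [left | case: ne_bs | right].
Qed.

Section Newton.
Variable m : nat.
Implicit Types (S T : mono m -> Prop) (c d : seq (RR * mono m)) (x y : pt m).

Definition newton S x :=
  exists c, [/\ weighted S c, wsum c = 1 & forall i, wpt c i <= x i].

Lemma newtE S : newt S = newton S.
Proof.
pose d0 : RR * mono m := (0, fun _ => 0%N).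
apply: functional_extensionality => x; apply: propositional_extensionality.
split=> [[s [l [Ss sz_l l_ge0 l_sum le_x]]]|[c [Hc c_sum le_x]]].
  exists (zip l s); split.
  - apply/(Forall_nthP _ d0) => j; rewrite size_zip sz_l minnn => lt_j.
    by rewrite nth_zip //=; split; [apply: l_ge0; rewrite mem_nth ?sz_l | apply: Ss].
  - by rewrite -l_sum /wsum -[in RHS](@unzip1_zip _ _ l s) ?sz_l // big_map.
  - move=> i; apply: le_trans (le_x i).
    rewrite /wpt (big_nth d0) size_zip sz_l minnn big_mkord le_eqVlt.
    by apply/predU1P; left; apply: eq_bigr => j _; rewrite nth_zip.
exists (unzip2 c), (unzip1 c); split.
- move=> j; rewrite size_map => lt_j; rewrite (nth_map d0) //.
  by move/(Forall_nthP _ d0): Hc => /(_ j lt_j) [].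
- by rewrite !size_map.
- move=> r /(nthP 0) [j]; rewrite size_map => lt_j <-; rewrite (nth_map d0) //.
  by move/(Forall_nthP _ d0): Hc => /(_ j lt_j) [].
- by rewrite big_map.
- move=> i; apply: le_trans (le_x i).
  rewrite /wpt (big_nth d0) big_mkord size_map le_eqVlt.
  by apply/predU1P; left; apply: eq_bigr => j _; rewrite !(nth_map d0).
Qed.

Lemma newton_mono S T x : (forall a, S a -> T a) -> newton S x -> newton T x.
Proof. by move=> ST [c [Hc c1 le_x]]; exists c; split=> //; apply: weighted_mono Hc. Qed.

Lemma newton_up S x y : newton S x -> (forall i, x i <= y i) -> newton S y.
Proof.
by move=> [c [Hc c1 le_x]] le_xy; exists c; split=> // i; apply: le_trans (le_xy i).
Qed.

Lemma newton_pt S a : S a -> newton S (ptN a).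
Proof.
move=> Sa; exists [:: (1, a)]; split; first by constructor.
  by rewrite /wsum big_seq1.
by move=> i; rewrite /wpt big_seq1 mul1r.
Qed.

Lemma newton_witness S x : newton S x -> exists a, S a.
Proof.
case=> [[|p c] [Hc c1 _]].
  by move: c1; rewrite /wsum big_nil => /eqP; rewrite eq_sym oner_eq0.
by exists p.2; case/List.Forall_cons_iff: Hc => [[]].
Qed.

Lemma weighted_bind S T (f : mono m -> pt m) c :
  (forall a, S a -> newton T (f a)) -> weighted S c ->
  exists d, [/\ weighted T d, wsum d = wsum c &
                forall i, wpt d i <= \sum_(p <- c) p.1 * f p.2 i].
Proof.
move=> Sf; elim=> [|p {}c [p0 Sp] _ [d [Hd d_c le_d]]].
  by exists [::]; split=> // i; rewrite /wpt !big_nil.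
have [e [He e1 le_e]] := Sf _ Sp.
exists (wscale p.1 e ++ d); split.
- by apply: weighted_cat => //; apply: weighted_scale.
- by rewrite wsum_cat wsum_scale e1 mulr1 d_c /wsum big_cons.
- by move=> i; rewrite wpt_cat wpt_scale big_cons lerD // ler_wpM2l.
Qed.

Lemma newton_trans S T x :
  (forall a, S a -> newton T (ptN a)) -> newton S x -> newton T x.
Proof.
move=> ST [c [Hc c1 le_x]]; have [d [Hd d_c le_d]] := weighted_bind ST Hc.
by exists d; split=> [||i]; rewrite ?d_c //; apply: le_trans (le_d i) (le_x i).
Qed.

Lemma newton_eq S T : (forall a, S a -> newton T (ptN a)) ->
  (forall a, T a -> newton S (ptN a)) -> newton S = newton T.
Proof.
move=> ST TS; apply: functional_extensionality => x.
by apply: propositional_extensionality; split; apply: newton_trans.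
Qed.

Definition msum S T : mono m -> Prop :=
  fun v => exists a b, [/\ S a, T b & forall i, v i = (a i + b i)%N].

Lemma newton_msum S T x y :
  newton S x -> newton T y -> newton (msum S T) (fun i => x i + y i).
Proof.
move=> [c [Hc c1 le_x]] [e [He e1 le_y]].
have shift a : S a -> newton (msum S T) (fun i => (a i)%:R + wpt e i).
  move=> Sa; exists [seq (q.1, fun i => (a i + q.2 i)%N) | q <- e]; split.
  - apply/List.Forall_map; apply: List.Forall_impl He => q [q0 Tq].
    by split=> //; exists a, q.2.
  - by rewrite /wsum big_map.
  - move=> i; rewrite /wpt big_map le_eqVlt; apply/predU1P; left.
    under eq_bigr => q _ do rewrite /= natrD mulrDr.
    by rewrite big_split /= -mulr_suml -/(wsum e) e1 mul1r.
have [d [Hd d_c le_d]] := weighted_bind shift Hc.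
exists d; split=> [||i]; rewrite ?d_c //; apply: le_trans (le_d i) _.
under eq_bigr => p _ do rewrite mulrDr.
rewrite big_split /= -mulr_suml -/(wsum c) c1 mul1r; exact: lerD (le_x i) (le_y i).
Qed.

Lemma is_vertex_sub (P Q : pt m -> Prop) z :
  (forall a, P a -> Q a) -> P z -> is_vertex Q z -> is_vertex P z.
Proof. by move=> PQ Pz [_ ext_z]; split=> // a b l Pa Pb; apply: ext_z; apply: PQ. Qed.

Lemma is_vertex_summand (P Q R : pt m -> Prop) y z :
  (forall a b, P a -> Q b -> R (fun i => a i + b i)) -> P y -> Q z ->
  is_vertex R (fun i => y i + z i) -> is_vertex Q z.
Proof.
move=> PQR Py Qz [_ ext_yz]; split=> // a b l Qa Qb l01 z_ab i.
apply: (addrI (y i)); apply: (ext_yz _ _ l (PQR _ _ Py Qa) (PQR _ _ Py Qb) l01) => j.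
by rewrite z_ab; ring.
Qed.

Definition verts S : mono m -> Prop := fun a => is_vertex (newton S) (ptN a).

Lemma vvertsE S : vverts S = verts S.
Proof. by rewrite /vverts /verts newtE. Qed.

Lemma ptN_inj (a b : mono m) : (forall i, ptN a i = ptN b i) -> a = b.
Proof.
move=> ab; apply: functional_extensionality => i.
by apply/eqP; rewrite -(eqr_nat RR); apply/eqP/ab.
Qed.

Lemma verts_wpt S v c t : verts S v -> weighted S c -> wsum c = t -> 0 < t ->
  (forall i, wpt c i = t * (v i)%:R) -> S v.
Proof.
move=> [_ ext_v]; elim: c t => [|p c IH] t Hc.
  by rewrite /wsum big_nil => <-; rewrite ltxx.
case/List.Forall_cons_iff: Hc => [[p0 Sp] Hc].
rewrite /wsum big_cons -/(wsum c) => <- t_gt0 Hv.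
have {}Hv i : p.1 * (p.2 i)%:R + wpt c i = (p.1 + wsum c) * (v i)%:R.
  by rewrite -Hv /wpt big_cons.
have [p_0|p_neq0] := eqVneq p.1 0.
  apply: (IH (wsum c)) => // [|i]; first by rewrite p_0 add0r in t_gt0.
  by have := Hv i; rewrite p_0 mul0r !add0r.
have [c_0|c_neq0] := eqVneq (wsum c) 0.
  suff -> : v = p.2 by [].
  apply: ptN_inj => i; have := Hv i; rewrite (wpt_wsum0 _ Hc c_0) c_0 !addr0.
  by rewrite /ptN => /(mulfI p_neq0).
have b_in : newton S (fun i => wpt c i / wsum c).
  exists (wscale (wsum c)^-1 c); split.
  - by apply: (weighted_scale _ Hc); rewrite invr_ge0 (wsum_ge0 Hc).
  - by rewrite wsum_scale mulVf.
  - by move=> i; rewrite wpt_scale mulrC.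
have c_gt0 : 0 < wsum c by rewrite lt0r c_neq0 (wsum_ge0 Hc).
have p_gt0 : 0 < p.1 by rewrite lt0r p_neq0.
set s := p.1 + wsum c in Hv t_gt0.
suff -> : v = p.2 by [].
apply: ptN_inj => i; symmetry.
apply: (ext_v _ _ (p.1 / s) (newton_pt Sp) b_in).
  by rewrite divr_gt0 //= ltr_pdivrMr // mul1r ltrDl.
move=> j; have -> : wpt c j = s * (v j)%:R - p.1 * (p.2 j)%:R by rewrite -Hv addrC addKr.
by rewrite /ptN /s; field; rewrite c_neq0 gt_eqF.
Qed.

Lemma verts_mem S v : verts S v -> S v.
Proof.
move=> vv; have [[c [Hc c1 le_v]] ext_v] := vv.
suff wpt_v i : wpt c i = (v i)%:R.
  by apply: (verts_wpt vv Hc c1 ltr01) => i; rewrite mul1r.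
have c_in : newton S (wpt c) by exists c.
have refl_in : newton S (fun i => 2 * (v i)%:R - wpt c i).
  by apply: newton_up c_in _ => j; have := le_v j; rewrite /ptN; lra.
apply: (ext_v _ _ (1 / 2) c_in refl_in); first by apply/andP; split; lra.
by move=> j; rewrite /ptN; lra.
Qed.
End Newton.

Section Dickson.
Variable m : nat.
Implicit Types (S T : mono m -> Prop) (M : seq (mono m)) (D : {set 'I_m}).

Definition finite_basis S := exists M, List.Forall S M /\
  forall x, S x -> List.Exists (fun y => forall i, (y i <= x i)%N) M.

Lemma finite_basis_bigcup (J : eqType) (L : seq J) (T : J -> mono m -> Prop) :
  (forall j, j \in L -> finite_basis (T j)) ->
  finite_basis (fun x => exists2 j, j \in L & T j x).
Proof.
elim: L => [|j L IH] fbT; first by exists [::]; split=> // x [].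
have [|M [MT baseM]] := IH; first by move=> k kL; apply: fbT; rewrite inE kL orbT.
have [|N [NT baseN]] := fbT j; first exact: mem_head.
exists (N ++ M); split.
  apply/List.Forall_app; split.
    by apply: List.Forall_impl NT => y Ty; exists j; first exact: mem_head.
  by apply: List.Forall_impl MT => y [k kL Ty]; exists k; rewrite // inE kL orbT.
move=> x [k]; rewrite inE => /predU1P [-> | kL] Tx; apply/List.Exists_app.
  by left; apply: baseN.
by right; apply: baseM; exists k.
Qed.

Definition const_off D S :=
  forall x y, S x -> S y -> forall i, i \notin D -> x i = y i.

Lemma finite_basis_step D S :
  (forall i, i \in D -> forall T, const_off (D :\ i) T -> finite_basis T) ->
  const_off D S -> finite_basis S.
Proof.
move=> IH cS; have [[s0 Ss0]|S0] := classic (exists s0, S s0); last first.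
  by exists [::]; split=> // x Sx; case: S0; exists x.
(* Each x in S lies above s0 unless x i < s0 i for some free coordinate i,
   and fixing the value of x i leaves one free coordinate fewer. *)
pose B := (\max_(i < m) s0 i).+1.
pose L := [seq (i, k) | i <- enum D, k <- iota 0 B].
pose T (p : 'I_m * nat) x := S x /\ x p.1 = p.2.
have [|M [MT baseM]] := @finite_basis_bigcup _ L T.
  move=> _ /allpairsP [[i k] [iD _ ->]] /=; rewrite mem_enum in iD.
  apply: (IH i iD) => x y [Sx xi] [Sy yi] j; rewrite in_setD1 negb_and negbK.
  by case/orP => [/eqP -> | jD]; [rewrite xi yi | apply: cS].
exists (s0 :: M); split.
  by constructor => //; apply: List.Forall_impl MT => y [p _ []].
move=> x Sx; have [s0_x|] := boolP [forall i, s0 i <= x i]%N.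
  by apply: List.Exists_cons_hd => i; move/forallP: s0_x.
rewrite negb_forall => /existsP [i]; rewrite -ltnNge => lt_xi.
have iD : i \in D by apply: contraLR lt_xi => /(cS x s0 Sx Ss0) ->; rewrite ltnn.
apply: List.Exists_cons_tl; apply: baseM; exists (i, x i) => //.
apply/allpairsP; exists (i, x i); split; rewrite ?mem_enum ?mem_iota //=.
by rewrite /B ltnS (leq_trans (ltnW lt_xi)) // (leq_bigmax (F := fun j : 'I_m => s0 j)).
Qed.

Lemma dickson S : finite_basis S.
Proof.
suff fb n D T : (#|D| <= n)%N -> const_off D T -> finite_basis T.
  by apply: (fb m setT) => [|x y _ _ i]; rewrite ?cardsT ?card_ord ?in_setT.
elim: n D T => [|n IH] D T leD; apply: finite_basis_step => i iD U.
  by move: leD; rewrite leqn0 cards_eq0 => /eqP D0; rewrite D0 inE in iD.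
by apply: IH; move: leD; rewrite (cardsD1 i D) iD.
Qed.
End Dickson.

Section NewtonVertices.
Variable m : nat.
Implicit Types (S T : mono m -> Prop) (M : seq (mono m)) (x : pt m).

Local Notation in_list M := (fun a => List.In a M).

(* [mono m] is a function type, so it carries no [eqType] structure. *)
Definition eqm (a b : mono m) := [forall i, a i == b i].

Lemma eqmP a b : reflect (a = b) (eqm a b).
Proof.
apply: (iffP forallP) => [ab|-> i //].
by apply: functional_extensionality => i; apply/eqP.
Qed.

Lemma newton_split_off S s x : newton S x ->
  exists d, weighted (fun a => S a /\ a <> s) d /\
            forall i, (1 - wsum d) * (s i)%:R + wpt d i <= x i.
Proof.
move=> [c [Hc c1 le_x]]; pose P (p : RR * mono m) := eqm p.2 s.
exists (filter (predC P) c); split.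
  apply/List.Forall_forall => p /List.filter_In [pc /negP Pp].
  have [p0 Sp] := (List.Forall_forall _ _).1 Hc p pc.
  by do !split=> //; move/eqmP.
have -> : 1 - wsum (filter (predC P) c) = wsum (filter P c).
  by rewrite -c1 (wsum_filterC P c) addrK.
move=> i; apply: le_trans (le_x i); rewrite (wpt_filterC P c) lerD2r le_eqVlt.
apply/predU1P; left; rewrite /wsum /wpt !big_filter mulr_suml.
by apply: eq_bigr => p /eqmP ->.
Qed.

Lemma newton_nonvertex S s : S s -> ~ verts S s ->
  newton (fun a => S a /\ a <> s) (ptN s).
Proof.
move=> Ss nvs; apply: NNPP => ns; apply: nvs; split; first exact: newton_pt.
move=> a b l a_in b_in /andP [l_gt0 l_lt1] s_ab; apply: NNPP => ne_a; apply: ns.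
have [da [Hda le_a]] := newton_split_off s a_in.
have [db [Hdb le_b]] := newton_split_off s b_in.
have da_ge0 := wsum_ge0 Hda; have db_ge0 := wsum_ge0 Hdb.
(* With U the weight off s, s = l a + (1 - l) b dominates (1 - U) s plus the
   off-s parts of a and b; rescaling by 1/U writes s through the other points. *)
set U := l * wsum da + (1 - l) * wsum db.
have [U0|U_neq0] := eqVneq U 0.
  have [da0 db0] : wsum da = 0 /\ wsum db = 0.
    by move: U0; rewrite /U => U0; split; nra.
  case: ne_a => i; move: (le_a i) (le_b i) (s_ab i).
  by rewrite (wpt_wsum0 _ Hda da0) (wpt_wsum0 _ Hdb db0) da0 db0 /ptN; nra.
have U_gt0 : 0 < U by rewrite lt0r U_neq0 /U; nra.
exists (wscale (l / U) da ++ wscale ((1 - l) / U) db); split.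
- by apply: weighted_cat; apply: weighted_scale; rewrite // divr_ge0 ?subr_ge0 ?ltW.
- by rewrite wsum_cat !wsum_scale mulrAC [(1 - l) / U * _]mulrAC -mulrDl divff.
move=> i; rewrite wpt_cat !wpt_scale mulrAC [(1 - l) / U * _]mulrAC -mulrDl.
rewrite ler_pdivrMr // mulrC.
have := ler_wpM2l (ltW l_gt0) (le_a i).
have l1_ge0 : 0 <= 1 - l by rewrite subr_ge0 ltW.
have := ler_wpM2l l1_ge0 (le_b i).
by have := s_ab i; rewrite /U /ptN; lra.
Qed.

Lemma newton_seq_verts n M x : (size M <= n)%N ->
  newton (in_list M) x -> newton (verts (in_list M)) x.
Proof.
elim: n M x => [|n IH] M x leM; first by case: M leM => // _ /newton_witness [].
have [allv|nallv] := classic (forall a, List.In a M -> verts (in_list M) a).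
  exact: newton_mono.
have [s Hs] := not_all_ex_not _ _ nallv; have [sM nvs] := imply_to_and _ _ Hs.
have [M1 [M2 eqM]] := List.in_split _ _ sM.
have {}eqM : M = M1 ++ s :: M2 := eqM.
have eq_newton : newton (in_list M) = newton (in_list (M1 ++ M2)).
  apply: newton_eq => a aM.
  - have [-> | ne_as] := classic (a = s); last first.
      by apply/newton_pt/(In_cat_consN _ ne_as); rewrite -eqM.
    move: (newton_nonvertex sM nvs); apply: newton_mono => b [bM ne_bs].
    by apply: (In_cat_consN _ ne_bs); rewrite -eqM.
  - apply: newton_pt; rewrite eqM; apply: List.in_or_app.
    by case: (List.in_app_or _ _ _ aM); [left | right; right].
rewrite /verts eq_newton; apply: IH.
by move: leM; rewrite eqM !size_cat /= addnS ltnS.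
Qed.

Lemma newton_verts S : newton (verts S) = newton S.
Proof.
have [M [MS baseM]] := dickson S.
have eqSM : newton S = newton (in_list M).
  apply: newton_eq => a.
  - move/baseM/List.Exists_exists => [y [yM le_ya]].
    by apply: newton_up (newton_pt yM) _ => i; rewrite /ptN ler_nat.
  - by move/(List.Forall_forall _ _).1: MS => MS /MS; apply: newton_pt.
rewrite /verts eqSM; apply: newton_eq => a; first by case.
by move=> aM; apply: newton_seq_verts (leqnn _) (newton_pt aM).
Qed.
End NewtonVertices.

Section SupportOfProducts.
Variables (K : fieldType) (m : nat).
Implicit Types (u w : ps K m) (v : mono m).

Lemma supp_mul u w v : Supp (ps_mul u w) v -> msum (Supp u) (Supp w) v.
Proof.
move=> uwv; apply: NNPP => nmsum; move: uwv.
rewrite /Supp /ps_mul big1 ?eqxx // => a /forallP le_av.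
have [ua|un] := eqVneq (u (fun i => nat_of_ord (a i))) 0; first by rewrite ua mul0r.
have [wa|wn] := eqVneq (w (fun i => (v i - a i)%N)) 0; first by rewrite wa mulr0.
case: nmsum; exists (fun i => nat_of_ord (a i)), (fun i => (v i - a i)%N).
by split=> // i; rewrite subnKC.
Qed.

Lemma ps_mul_unique u w v y0 z0 : (forall i, v i = (y0 i + z0 i)%N) ->
  (forall y z, u y != 0 -> w z != 0 -> (forall i, v i = (y i + z i)%N) -> y = y0) ->
  ps_mul u w v = u y0 * w z0.
Proof.
move=> v_yz0 uniq_v.
have lt_y0 i : (y0 i < ps_bnd v)%N.
  have le_v : (v i <= \max_(j < m) v j)%N := leq_bigmax (F := fun j : 'I_m => v j) i.
  by rewrite /ps_bnd ltnS (leq_trans _ le_v) // v_yz0 leq_addr.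
pose a0 : {ffun 'I_m -> 'I_(ps_bnd v)} := [ffun i => Ordinal (lt_y0 i)].
have a0E : (fun i => nat_of_ord (a0 i)) = y0.
  by apply: functional_extensionality => i; rewrite ffunE.
rewrite /ps_mul (bigD1 a0) /=; last by apply/forallP => i; rewrite ffunE /= v_yz0 leq_addr.
rewrite big1 ?addr0.
  rewrite a0E; congr (_ * w _); apply: functional_extensionality => i.
  by rewrite ffunE /= v_yz0 addKn.
move=> a /andP [/forallP le_av ne_a0].
have [ua|un] := eqVneq (u (fun i => nat_of_ord (a i))) 0; first by rewrite ua mul0r.
have [wa|wn] := eqVneq (w (fun i => (v i - a i)%N)) 0; first by rewrite wa mulr0.
case/eqP: ne_a0; apply/ffunP => i; apply/val_inj.
have /(congr1 (fun f => f i)) := uniq_v _ _ un wn (fun j => esym (subnKC (le_av j))).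
by rewrite -a0E.
Qed.

Lemma verts_msum_supp_mul u w v :
  verts (msum (Supp u) (Supp w)) v -> Supp (ps_mul u w) v.
Proof.
move=> vv; have [y0 [z0 [uy0 wz0 v_yz0]]] := verts_mem vv.
rewrite /Supp (ps_mul_unique v_yz0) ?mulf_neq0 // => y z uy wz v_yz.
(* Another decomposition v = y + z makes v the midpoint of y + z0 and y0 + z. *)
have [_ ext_v] := vv.
have a_in : newton (msum (Supp u) (Supp w)) (ptN (fun j => (y j + z0 j)%N)).
  by apply: newton_pt; exists y, z0.
have b_in : newton (msum (Supp u) (Supp w)) (ptN (fun j => (y0 j + z j)%N)).
  by apply: newton_pt; exists y0, z.
apply: functional_extensionality => i; apply/eqP.
suff /(_ i) : forall j, ptN (fun j => (y j + z0 j)%N) j = ptN v j.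
  by rewrite /ptN => /eqP; rewrite eqr_nat v_yz0 eqn_add2r.
apply: (ext_v _ _ (1 / 2) a_in b_in); first by apply/andP; split; lra.
move=> j; have e1 : (v j)%:R = (y j)%:R + (z j)%:R :> RR by rewrite v_yz natrD.
have e2 : (v j)%:R = (y0 j)%:R + (z0 j)%:R :> RR by rewrite v_yz0 natrD.
by rewrite /ptN !natrD; lra.
Qed.

Lemma newton_supp_mul u w x y : newton (Supp u) x -> newton (Supp w) y ->
  newton (Supp (ps_mul u w)) (fun i => x i + y i).
Proof.
move=> ux wy; move: (newton_msum ux wy); rewrite -newton_verts.
by apply: newton_mono => a; apply: verts_msum_supp_mul.
Qed.
End SupportOfProducts.

Section TropicalOrder.
Variables (K : fieldType) (m : nat).
Implicit Types (S T : mono m -> Prop) (f g : ps K m).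

Lemma verts_idem S : verts (verts S) = verts S.
Proof. by rewrite {1}/verts newton_verts. Qed.

Lemma verts_inj S T : verts S = verts T -> newton S = newton T.
Proof. by rewrite -(newton_verts S) -(newton_verts T) => ->. Qed.

Lemma verts_union S T :
  verts (fun x => verts S x \/ verts T x) = verts (fun x => S x \/ T x).
Proof.
congr (fun P a => is_vertex P (ptN a)).
apply: newton_eq => a [a_in | a_in].
- by case: a_in => + _; apply: newton_mono => b; left.
- by case: a_in => + _; apply: newton_mono => b; right.
- by move: (newton_pt a_in); rewrite -newton_verts; apply: newton_mono => b; left.
- by move: (newton_pt a_in); rewrite -newton_verts; apply: newton_mono => b; right.
Qed.

Lemma vb_mulr1 (X : vb m) : vb_mul X (@vb_one m) = vverts X.
Proof.
congr vverts; apply: functional_extensionality => x; apply: propositional_extensionality.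
split=> [[y [z [Xy z0 xyz]]] | Xx].
  by have -> : x = y by apply: functional_extensionality => i; rewrite xyz z0 addn0.
by exists x, (fun _ => 0%N); split=> // i; rewrite addn0.
Qed.

Lemma vb_mul1r (X : vb m) : vb_mul (@vb_one m) X = vverts X.
Proof.
congr vverts; apply: functional_extensionality => x; apply: propositional_extensionality.
split=> [[y [z [y0 Xz xyz]]] | Xx]; last by exists (fun _ => 0%N), x.
by have -> : x = z by apply: functional_extensionality => i; rewrite xyz y0.
Qed.

Lemma trop_verts f : trop f = verts (Supp f).
Proof. exact: vvertsE. Qed.

Definition dominated f g := forall a, Supp f a -> newton (Supp g) (ptN a).

Lemma trop_le1P f g : vfrac_le (trop f, trop g) (vfrac_one m) <-> dominated f g.
Proof.
rewrite /vfrac_le /= !vb_mulr1 /vb_le /vb_eq /vb_add !vvertsE !trop_verts !verts_idem.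
rewrite verts_union; split=> [eq_verts a fa | dom a].
- have {}eq_verts : verts (fun x => Supp f x \/ Supp g x) = verts (Supp g).
    by apply: functional_extensionality => x; apply: propositional_extensionality.
  by rewrite -(verts_inj eq_verts); apply: newton_pt; left.
- rewrite /verts; suff -> : newton (fun x => Supp f x \/ Supp g x) = newton (Supp g) by [].
  apply: newton_eq => b; last by move=> gb; apply: newton_pt; right.
  by case=> [/dom | /newton_pt].
Qed.

Lemma trop_ll1_verts f g : vfrac_ll (trop f, trop g) (vfrac_one m) ->
  forall a, verts (Supp f) a -> ~ verts (Supp g) a.
Proof.
case=> _ [_ disj] a; move: (disj a).
by rewrite /= vb_mulr1 vb_mul1r !vvertsE !trop_verts !verts_idem.
Qed.
End TropicalOrder.

Section ValuationRing.
Variables (K : fieldType) (m : nat) (F : fieldType) (iota : ps K m -> F).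
Hypothesis hF : is_frac_field iota.
Implicit Types (f g h : ps K m) (x y : F).

Definition ps_opp f : ps K m := fun a => - f a.

Lemma iotaD f g : iota (ps_add f g) = iota f + iota g. Proof. by case: hF. Qed.
Lemma iotaM f g : iota (ps_mul f g) = iota f * iota g. Proof. by case: hF. Qed.
Lemma iota1 : iota (@ps_one K m) = 1. Proof. by case: hF. Qed.
Lemma iota_inj : injective iota. Proof. by case: hF. Qed.

Lemma iota0 : iota (@ps_zero K m) = 0.
Proof.
have add00 : ps_add (@ps_zero K m) (@ps_zero K m) = @ps_zero K m.
  by apply: functional_extensionality => a; rewrite /ps_add /ps_zero addr0.
by apply: (addrI (iota (@ps_zero K m))); rewrite -iotaD add00 addr0.
Qed.

Lemma iotaN f : iota (ps_opp f) = - iota f.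
Proof.
have addNf : ps_add (ps_opp f) f = @ps_zero K m.
  by apply: functional_extensionality => a; rewrite /ps_add /ps_opp /ps_zero addNr.
by apply/eqP; rewrite -addr_eq0 -iotaD addNf iota0.
Qed.

Lemma iota_neq0 f a : Supp f a -> iota f != 0.
Proof.
apply: contraNN => /eqP; rewrite -iota0 => /iota_inj ->.
by rewrite /Supp /ps_zero eqxx.
Qed.

Lemma verts_witness f : iota f != 0 -> exists v, verts (Supp f) v.
Proof.
move=> f0; suff [a fa] : exists a, Supp f a.
  by move: (newton_pt fa); rewrite -newton_verts => /newton_witness.
apply: NNPP => nS; move/eqP: f0; apply; rewrite -iota0; congr iota.
by apply: functional_extensionality => a; apply/eqP/negPn/negP => fa; apply: nS; exists a.
Qed.

Lemma dominated_refl f : dominated f f.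
Proof. by move=> a; apply: newton_pt. Qed.

Lemma dominated0 g : dominated (@ps_zero K m) g.
Proof. by move=> a; rewrite /Supp /ps_zero eqxx. Qed.

Lemma dominatedD f1 f2 g : dominated f1 g -> dominated f2 g -> dominated (ps_add f1 f2) g.
Proof.
move=> f1g f2g a; have [f1a|] := eqVneq (f1 a) 0; last by move=> /f1g.
by rewrite /Supp /ps_add f1a add0r => /f2g.
Qed.

Lemma dominatedN f g : dominated f g -> dominated (ps_opp f) g.
Proof. by move=> fg a; rewrite /Supp /ps_opp oppr_eq0 => /fg. Qed.

Lemma dominatedM f1 g1 f2 g2 :
  dominated f1 g1 -> dominated f2 g2 -> dominated (ps_mul f1 f2) (ps_mul g1 g2).
Proof.
move=> fg1 fg2 a /supp_mul [y [z [f1y f2z a_yz]]].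
apply: newton_up (newton_supp_mul (fg1 _ f1y) (fg2 _ f2z)) _ => i.
by rewrite /ptN a_yz natrD.
Qed.

Lemma in_circE x : in_circ iota x <->
  exists f g, [/\ iota g != 0, x = iota f / iota g & dominated f g].
Proof. by split=> [] [f [g [g0 x_fg fg]]]; exists f, g; split=> //; apply/trop_le1P. Qed.

Lemma in_circ0 : in_circ iota 0.
Proof.
apply/in_circE; exists (@ps_zero K m), (@ps_one K m).
by rewrite iota0 iota1 mul0r; split; [apply: oner_neq0 | | apply: dominated0].
Qed.

Lemma in_circ1 : in_circ iota 1.
Proof.
apply/in_circE; exists (@ps_one K m), (@ps_one K m).
by rewrite iota1 divr1; split; [apply: oner_neq0 | | apply: dominated_refl].
Qed.

Lemma in_circD x y : in_circ iota x -> in_circ iota y -> in_circ iota (x + y).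
Proof.
move=> /in_circE [f1 [g1 [g10 -> fg1]]] /in_circE [f2 [g2 [g20 -> fg2]]].
apply/in_circE; exists (ps_add (ps_mul f1 g2) (ps_mul g1 f2)), (ps_mul g1 g2).
rewrite iotaD !iotaM mulf_neq0 //; split=> //; first by field; apply/andP.
by apply: dominatedD; apply: dominatedM => //; apply: dominated_refl.
Qed.

Lemma in_circN x : in_circ iota x -> in_circ iota (- x).
Proof.
move=> /in_circE [f [g [g0 -> fg]]]; apply/in_circE; exists (ps_opp f), g.
by rewrite iotaN mulNr; split=> //; apply: dominatedN.
Qed.

Lemma in_circB x y : in_circ iota x -> in_circ iota y -> in_circ iota (x - y).
Proof. by move=> xc yc; apply: in_circD => //; apply: in_circN. Qed.

Lemma in_circM x y : in_circ iota x -> in_circ iota y -> in_circ iota (x * y).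
Proof.
move=> /in_circE [f1 [g1 [g10 -> fg1]]] /in_circE [f2 [g2 [g20 -> fg2]]].
apply/in_circE; exists (ps_mul f1 f2), (ps_mul g1 g2).
by rewrite !iotaM mulf_neq0 //; split=> //; [field; apply/andP | apply: dominatedM].
Qed.
End ValuationRing.

Section OneMinusUnit.
Variables (K : fieldType) (m : nat) (F : fieldType) (iota : ps K m -> F).
Hypothesis hF : is_frac_field iota.
Implicit Types (f g h a b : ps K m).

Lemma verts_mul_coef0 a b f g v : dominated a b -> dominated f g ->
  (forall z, verts (Supp f) z -> ~ verts (Supp g) z) ->
  verts (Supp (ps_mul b g)) v -> ps_mul a f v = 0.
Proof.
move=> ab fg disj vv; apply: NNPP => /eqP /supp_mul [y [z [ay fz v_yz]]].
have vE : ptN v = (fun i => ptN y i + ptN z i).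
  by apply: functional_extensionality => i; rewrite /ptN v_yz natrD.
have gz : verts (Supp g) z.
  apply: (is_vertex_summand (P := newton (Supp b))) (ab _ ay) (fg _ fz) _.
    by move=> p q; apply: newton_supp_mul.
  by rewrite -vE.
apply: (disj z _ gz); apply: (is_vertex_sub _ _ gz); last exact: newton_pt.
by move=> p; apply: newton_trans.
Qed.

Lemma dominated_verts f h : (forall v, verts (Supp f) v -> Supp h v) -> dominated f h.
Proof. by move=> fh a fa; move: (newton_pt fa); rewrite -newton_verts; apply: newton_mono. Qed.

Lemma in_circ_one_sub_unit r f g : in_circ iota r -> iota g != 0 -> dominated f g ->
  (forall z, verts (Supp f) z -> ~ verts (Supp g) z) ->
  exists2 u, in_circ iota u & u * (1 - r * (iota f / iota g)) = 1.
Proof.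
case/in_circE=> [a [b [b0 -> ab]]] g0 fg disj.
pose h := ps_add (ps_mul b g) (ps_opp (ps_mul a f)).
have bg_h v : verts (Supp (ps_mul b g)) v -> Supp h v.
  move=> vv; rewrite /Supp /h /ps_add /ps_opp (verts_mul_coef0 ab fg disj vv) oppr0 addr0.
  exact: verts_mem vv.
have bg0 : iota (ps_mul b g) != 0 by rewrite iotaM // mulf_neq0.
have [v vv] := verts_witness hF bg0.
have h0 := iota_neq0 hF (bg_h v vv).
exists (iota (ps_mul b g) / iota h).
  by apply/in_circE; exists (ps_mul b g), h; split=> //; apply: dominated_verts.
move: h0; rewrite /h iotaD // iotaN // !iotaM // => h0.
by field; rewrite b0 g0 h0.
Qed.
End OneMinusUnit.

Section MaximalIdeals.
Variables (K : fieldType) (m : nat) (F : fieldType) (iota : ps K m -> F).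
Hypothesis hF : is_frac_field iota.
Implicit Types (I : F -> Prop) (x q : F).

Lemma circ_ideal_adjoin I q : circ_ideal iota I -> in_circ iota q ->
  circ_ideal iota (fun x => exists y r, [/\ I y, in_circ iota r & x = y + r * q]).
Proof.
move=> [Ic I0 IB IM] qc; split.
- by move=> x [y [r [Iy rc ->]]]; apply: in_circD (Ic _ Iy) (in_circM hF rc qc).
- by exists 0, 0; rewrite mul0r addr0; split=> //; apply: in_circ0.
- move=> x1 x2 [y1 [r1 [Iy1 rc1 ->]]] [y2 [r2 [Iy2 rc2 ->]]].
  by exists (y1 - y2), (r1 - r2); split; [apply: IB | apply: in_circB | ring].
- move=> s x sc [y [r [Iy rc ->]]].
  by exists (s * y), (s * r); split; [apply: IM | apply: in_circM | ring].
Qed.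

Lemma maximal_ideal_mem I q : circ_maximal_ideal iota I -> in_circ iota q ->
  (forall r, in_circ iota r -> exists2 u, in_circ iota u & u * (1 - r * q) = 1) ->
  I q.
Proof.
move=> [[idI I1] maxI] qc unit_q; have [_ I0 _ IM] := idI.
pose J x := exists y r, [/\ I y, in_circ iota r & x = y + r * q].
have [[y [r [Iy rc J1]]] | nJ1] := classic (J 1).
  have [u uc u1] := unit_q r rc.
  by case: I1; rewrite -u1; apply: IM; rewrite // J1 addrK.
apply: (maxI J (conj (circ_ideal_adjoin idI qc) nJ1)) => [x Ix|].
  by exists x, 0; rewrite mul0r addr0; split=> //; apply: in_circ0.
by exists 0, 1; rewrite mul1r add0r; split=> //; apply: in_circ1.
Qed.
End MaximalIdeals.

Unset Implicit Arguments.

Theorem lemma4p7 (K : fieldType) (m : nat) (F : fieldType) (iota : ps K m -> F)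
  (hK : [pchar K] =i pred0) (hF : is_frac_field iota) (q : F)
  (hq : in_circ iota q) (hll : trop_ll_one iota q) :
  forall I : F -> Prop, circ_maximal_ideal iota I -> I q.
Proof.
move=> I maxI; apply: (maximal_ideal_mem hF maxI hq) => r rc.
have [f [g [g0 -> ll]]] := hll.
apply: (in_circ_one_sub_unit hF rc g0); last exact: trop_ll1_verts.
by apply/trop_le1P; case: ll.
Qed.
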